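(* Suppose $\mathfrak g(A)$ is integrable, and $A$ is elemental and indecomposable with $n\ge2$. Then, after multiplying rows of $A$ by suitable nonzero scalars, $A$ satisfies: (C1) $a_{ii}\in\{0,2\}$ for all $i\in I$; (C2) if $a_{ii}=0$ then $p(i)=1$; (C3) if $a_{ii}=2$ then $a_{ij}\in 2^{p(i)}\mathbb Z_{\le0}$ for all $j\neq i$; (C4) if $a_{ij}=0$ and $a_{ji}\ne0$ then $a_{ii}=0$.
   Context: Let $I=\{1,\dots,n\}$, let $A=(a_{ij})_{i,j\in I}$ be a complex $n\times n$ matrix and $p:I\to\mathbb Z_2$ a parity function. Fix a complex vector space $\mathfrak h$ of dimension $n+\operatorname{corank}(A)$, linearly independent $\alpha_1,\dots,\alpha_n\in\mathfrak h^*$ and $h_1,\dots,h_n\in\mathfrak h$ with $\alpha_j(h_i)=a_{ij}$. Let $\bar{\mathfrak g}(A)$ be the Lie superalgebra generated by $\mathfrak h$ (even, abelian) and elements $X_i,Y_i$ ($i\in I$) of parity $p(i)$ subject to $[h,X_i]=\alpha_i(h)X_i$, $[h,Y_i]=-\alpha_i(h)Y_i$, $[X_i,Y_j]=\delta_{ij}h_i$. The contragredient Lie superalgebra $\mathfrak g(A)$ is the quotient of $\bar{\mathfrak g}(A)$ by the unique maximal ideal meeting $\mathfrak h$ trivially; we keep writing $X_i,Y_i,h_i$ for the images. Multiplying rows of $A$ by nonzero scalars does not change $\mathfrak g(A)$ up to isomorphism. $\mathfrak g(A)$ is integrable if $\operatorname{ad}X_i$ is locally nilpotent on $\mathfrak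 g(A)$ for every $i\in I$. $A$ is elemental if it has no zero row; indecomposable if $I$ is not a disjoint union of nonempty $J,K$ with $a_{jk}=a_{kj}=0$ for $j\in J,k\in K$. *)

From HB Require Import structures.
From mathcomp Require Import all_boot all_order all_algebra.
Set Implicit Arguments. Unset Strict Implicit. Unset Printing Implicit Defensive.
Import Order.TTheory GRing.Theory Num.Theory.
Local Open Scope ring_scope.

Section Defs.
Variable R : numClosedFieldType.

(* ---------- Lie superalgebras ----------
   A Lie superalgebra structure on the R-module L is given by an idempotent
   linear map e : L -> L (projection onto the even part L_0 along the odd
   part L_1, so L = L_0 (+) L_1) and a bilinear bracket b, satisfying
   parity compatibility, super skew-symmetry and the super Jacobi identity
   on homogeneous elements.  Parities are booleans (true = odd). *)

Variable L : lmodType R.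

Definition homog (e : L -> L) (q : bool) (x : L) : Prop :=
  e x = (if q then 0 else x).

Definition lie_superalgebra (e : L -> L) (b : L -> L -> L) : Prop :=
  (forall (a : R) (x y : L), e (a *: x + y) = a *: e x + e y) /\
  (forall x, e (e x) = e x) /\
  (forall (a : R) (x y z : L), b (a *: x + y) z = a *: b x z + b y z) /\
  (forall (a : R) (x y z : L), b z (a *: x + y) = a *: b z x + b z y) /\
  (forall (q r : bool) (x y : L), homog e q x -> homog e r y ->
     homog e (q (+) r) (b x y)) /\
  (forall (q r : bool) (x y : L), homog e q x -> homog e r y ->
     b x y = - (((-1) ^+ (q && r)) *: b y x)) /\
  (forall (q r : bool) (x y z : L), homog e q x -> homog e r y ->
     b x (b y z) = b (b x y) z + ((-1) ^+ (q && r)) *: b y (b x z)).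

Definition subspace (S : L -> Prop) : Prop :=
  S 0 /\ forall (a : R) x y, S x -> S y -> S (a *: x + y).

Definition is_ideal (e : L -> L) (b : L -> L -> L) (J : L -> Prop) : Prop :=
  [/\ subspace J, forall x, J x -> J (e x)
    & forall x y, J y -> J (b x y) /\ J (b y x)].

End Defs.

Section Contragredient.
Variable R : numClosedFieldType.

Definition corank n (A : 'M[R]_n) : nat := (n - \rank A)%N.

(* Realization data: h = 'rV_d with d = n + corank A; alpha_j(u) = (u *m alpha^T) 0 j
   (row j of alpha represents the functional alpha_j); h_i = row i hh. *)
Definition realization n (A : 'M[R]_n) (alpha hh : 'M[R]_(n, n + corank A)) : Prop :=
  row_free alpha /\ hh *m alpha^T = A.

(* (L, e, b) together with iota : h -> L and X, Y is (isomorphic to) the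
   contragredient Lie superalgebra g(A): it is generated by iota(h), X_i, Y_i
   subject to the defining relations of gbar(A) (so it is a quotient of gbar(A)
   by an ideal meeting h trivially, as iota is injective), and it has no nonzero
   ideal meeting iota(h) trivially (so that ideal is the maximal one). *)
Definition contragredient n (A : 'M[R]_n) (p : 'I_n -> bool)
  (alpha hh : 'M[R]_(n, n + corank A)) (L : lmodType R)
  (e : L -> L) (b : L -> L -> L) (iota : 'rV[R]_(n + corank A) -> L)
  (X Y : 'I_n -> L) : Prop :=
  lie_superalgebra e b /\
      ((forall (a : R) u v, iota (a *: u + v) = a *: iota u + iota v) /\ injective iota) /\
      ((forall u, homog e false (iota u)) /\ (forall u v, b (iota u) (iota v) = 0)) /\
      ((forall u i, b (iota u) (X i) = (u *m alpha^T) 0 i *: X i) /\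
       (forall u i, b (iota u) (Y i) = - ((u *m alpha^T) 0 i *: Y i))) /\
      (forall i j, b (X i) (Y j) = if i == j then iota (row i hh) else 0) /\
      (forall i, homog e (p i) (X i) /\ homog e (p i) (Y i)) /\
      (forall S : L -> Prop, subspace S ->
         (forall u, S (iota u)) -> (forall i, S (X i) /\ S (Y i)) ->
         (forall x y, S x -> S y -> S (b x y)) -> forall x, S x) /\
      (forall J : L -> Prop, is_ideal e b J ->
         (forall u, J (iota u) -> u = 0) -> forall x, J x -> x = 0).

Definition integrable n (L : lmodType R) (b : L -> L -> L) (X : 'I_n -> L) : Prop :=
  forall i x, exists N : nat, iter N (b (X i)) x = 0.

Definition elemental n (A : 'M[R]_n) : Prop :=
  forall i, exists j, A i j != 0.

Definition indecomposable n (A : 'M[R]_n) : Prop :=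
  forall J : {set 'I_n}, J != set0 -> J != setT ->
    exists j k, [/\ j \in J, k \notin J & (A j k != 0) || (A k j != 0)].

Definition C1 n (A : 'M[R]_n) : Prop := forall i, A i i = 0 \/ A i i = 2%:R.
Definition C2 n (A : 'M[R]_n) (p : 'I_n -> bool) : Prop :=
  forall i, A i i = 0 -> p i = true.
Definition C3 n (A : 'M[R]_n) (p : 'I_n -> bool) : Prop :=
  forall i, A i i = 2%:R -> forall j, j != i ->
    exists k : nat, A i j = - ((2 ^ (p i) * k)%N%:R).
Definition C4 n (A : 'M[R]_n) : Prop :=
  forall i j, A i j = 0 -> A j i != 0 -> A i i = 0.

Definition rescale_rows n (c : 'I_n -> R) (A : 'M[R]_n) : 'M[R]_n :=
  \matrix_(i, j) (c i * A i j).

End Contragredient.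

Arguments realization {R n} A alpha hh.
Arguments contragredient {R n} A p alpha hh {L} e b iota X Y.

From HB Require Import structures.
From mathcomp Require Import all_boot all_order all_algebra.
From mathcomp Require Import ring.

Set Implicit Arguments. Unset Strict Implicit. Unset Printing Implicit Defensive.
Import Order.TTheory GRing.Theory Num.Theory.
Local Open Scope ring_scope.

(* For i <> j consider the X_i-string through X_j,
   v_k = (ad X_i)^k X_j.  Each v_k is an h-weight vector of h_i-weight
   a_ij + k a_ii, and Y_i acts by lowering: [Y_i, v_(k+1)] = c_(k+1) v_k,
   where the scalars c_k = string_coef s a_ij a_ii k (s = (-1)^p(i)) obey a
   simple recursion.  Integrability makes the string terminate; at the first
   m with v_m = 0 we get c_m = 0 (as v_(m-1) <> 0, and v_0 = X_j <> 0 because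
   A is elemental).  Solving the recursion in closed form (separately for
   s = 1 and s = -1), c_m = 0 forces a_ij = 0 when a_ii = 0 and p(i) even,
   and 2 a_ij / a_ii = -2^p(i) k with m = 2^p(i) k + 1 when a_ii <> 0.
   Moreover if m = 1, i.e. [X_i, X_j] = 0, the Jacobi identity applied with
   Y_j gives a_ji = 0.  Rescaling row i by 2 / a_ii (or 1 if a_ii = 0) then
   yields (C1)-(C4). *)

(* The lowering coefficients of an sl2-like string: with [y, x] = -s h,
   [h, x] = a_ii x and [h, z] = a_ij z, the coefficient c_k such that
   [y, (ad x)^k z] = c_k (ad x)^(k-1) z. *)
Fixpoint string_coef {F : nzRingType} (s a_ij a_ii : F) (k : nat) : F :=
  if k is k'.+1 then s * (string_coef s a_ij a_ii k' - (a_ij + k'%:R * a_ii))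
  else 0.

Lemma string_coefS {F : nzRingType} (s a_ij a_ii : F) k :
  string_coef s a_ij a_ii k.+1 =
  s * (string_coef s a_ij a_ii k - (a_ij + k%:R * a_ii)).
Proof. by []. Qed.

Section BilinearBracket.
Variables (F : nzRingType) (L : lmodType F) (b : L -> L -> L).
Hypothesis bracketDl : forall (a : F) u v w, b (a *: u + v) w = a *: b u w + b v w.
Hypothesis bracketDr : forall (a : F) u v w, b w (a *: u + v) = a *: b w u + b w v.

Lemma bracket0l w : b 0 w = 0.
Proof.
have := bracketDl 1 0 0 w; rewrite !scale1r !addr0 => E.
by apply: (addrI (b 0 w)); rewrite addr0 -E.
Qed.

Lemma bracket0r w : b w 0 = 0.
Proof.
have := bracketDr 1 0 0 w; rewrite !scale1r !addr0 => E.
by apply: (addrI (b w 0)); rewrite addr0 -E.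
Qed.

Lemma bracketZl a u w : b (a *: u) w = a *: b u w.
Proof. by have := bracketDl a u 0 w; rewrite addr0 bracket0l addr0. Qed.

Lemma bracketZr a u w : b w (a *: u) = a *: b w u.
Proof. by have := bracketDr a u 0 w; rewrite addr0 bracket0r addr0. Qed.

Lemma bracketNl u w : b (- u) w = - b u w.
Proof. by rewrite -scaleN1r bracketZl scaleN1r. Qed.

Lemma bracketNr u w : b w (- u) = - b w u.
Proof. by rewrite -scaleN1r bracketZr scaleN1r. Qed.

Section String.
Variables (x y z h : L) (s a_ij a_ii : F).
Hypothesis yx : b y x = - (s *: h).
Hypothesis jacobi_y : forall w, b y (b x w) = b (b y x) w + s *: b x (b y w).
Hypothesis jacobi_h : forall w, b h (b x w) = b (b h x) w + b x (b h w).
Hypothesis hx : b h x = a_ii *: x.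
Hypothesis hz : b h z = a_ij *: z.
Hypothesis yz : b y z = 0.

Lemma string_weight k : b h (iter k (b x) z) = (a_ij + k%:R * a_ii) *: iter k (b x) z.
Proof.
elim: k => [|k IH] /=; first by rewrite mul0r addr0.
rewrite jacobi_h IH hx bracketZl bracketZr -scalerDl; congr (_ *: _).
by rewrite -nat1r mulrDl mul1r addrCA addrA.
Qed.

Lemma string_lowering k :
  b y (iter k.+1 (b x) z) = string_coef s a_ij a_ii k.+1 *: iter k (b x) z.
Proof.
elim: k => [|k IH] /=.
  rewrite jacobi_y yz bracket0r scaler0 addr0 yx bracketNl bracketZl hz.
  by rewrite mul0r addr0 sub0r scalerA mulrN scaleNr.
rewrite jacobi_y IH bracketZr yx bracketNl bracketZl (string_weight k.+1).
by rewrite scalerA -scaleNr scalerA -scalerDl mulrBr addrC.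
Qed.

End String.
End BilinearBracket.

Lemma first_vanishing (F : fieldType) (L : lmodType F) (f : L -> L)
    (v : nat -> L) (c : nat -> F) :
  f 0 = 0 -> v 0%N != 0 -> (exists N, v N = 0) ->
  (forall k, f (v k.+1) = c k.+1 *: v k) ->
  exists m, [/\ (0 < m)%N, v m = 0 & c m = 0].
Proof.
move=> f0 v0 [N vN] lowering.
have exP : exists N, v N == 0 by exists N; apply/eqP.
case: (ex_minnP exP) => [[|m] /eqP vm minimal]; first by rewrite vm eqxx in v0.
have vm_neq0 : v m != 0.
  by apply/negP => /minimal; rewrite ltnn.
exists m.+1; split => //; apply/eqP.
have := lowering m; rewrite vm f0 => /esym/eqP.
by rewrite scaler_eq0 (negbTE vm_neq0) orbF.
Qed.

Lemma string_coef_even (F : nzRingType) (a_ij a_ii : F) k :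
  string_coef 1 a_ij a_ii k *+ 2 = - (a_ij *+ k.*2 + a_ii *+ (k * k.-1)).
Proof.
elim: k => [|k IH]; first by rewrite /= mul0rn !mulr0n addr0 oppr0.
have triangular : (k.+1 * k = k * k.-1 + k.*2)%N.
  by case: k {IH} => // k; rewrite -mul2n; ring.
rewrite string_coefS mul1r mulrnBl IH triangular doubleS mulr_natl mulrnDl -mulrnA muln2.
rewrite -[k.*2.+2]addn2 !mulrnDr !opprD !addrA; congr (_ - _).
by rewrite (addrAC _ (- (a_ii *+ _))) (addrAC _ (- (a_ii *+ (k * k.-1)))).
Qed.

Lemma string_coef_odd (F : nzRingType) (a_ij a_ii : F) t :
  string_coef (-1) a_ij a_ii t.*2 = a_ii *+ t /\
  string_coef (-1) a_ij a_ii t.*2.+1 = a_ij + a_ii *+ t.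
Proof.
elim: t => [|t [_ IH]]; first by rewrite /= !mulr0n mul0r addr0 sub0r mulN1r opprK.
have even_step : string_coef (-1) a_ij a_ii t.+1.*2 = a_ii *+ t.+1.
  rewrite doubleS string_coefS IH mulN1r opprB mulr_natl -addnn -addSn mulrnDr.
  by rewrite (addrC a_ij) addrKA addrK.
split=> //; rewrite string_coefS even_step mulN1r opprB mulr_natl -addnn mulrnDr.
by rewrite addrA addrK.
Qed.

Lemma string_root_even (F : numDomainType) (a_ij a_ii : F) m : (0 < m)%N ->
  string_coef 1 a_ij a_ii m = 0 -> a_ij *+ 2 = - (a_ii *+ m.-1).
Proof.
move=> m_gt0 cm; have := string_coef_even a_ij a_ii m; rewrite cm mul0rn.
move=> /esym/eqP; rewrite oppr_eq0 -muln2 mulnC mulrnA (mulnC m) mulrnA.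
rewrite -mulrnDl mulrn_eq0 (negbTE (lt0n_neq0 m_gt0)) /= addr_eq0.
by move/eqP.
Qed.

Lemma string_root_degenerate (F : numDomainType) (a_ij : F) m : (0 < m)%N ->
  string_coef 1 a_ij 0 m = 0 -> a_ij = 0.
Proof.
move=> m_gt0 /(string_root_even m_gt0); rewrite mul0rn oppr0 => /eqP.
by rewrite mulrn_eq0 /= => /eqP.
Qed.

Lemma string_root (F : numFieldType) (q : bool) (a_ij a_ii : F) m :
  a_ii != 0 -> (0 < m)%N -> string_coef ((-1) ^+ q) a_ij a_ii m = 0 ->
  exists k, m = (2 ^ q * k).+1 /\ 2%:R / a_ii * a_ij = - ((2 ^ q * k)%N%:R).
Proof.
move=> aii_neq0 m_gt0; case: q => /=; last first.
  rewrite expr0 => /(string_root_even m_gt0) root.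
  exists m.-1; rewrite expn0 mul1n prednK //; split=> //.
  by rewrite mulrAC mulr_natl root mulNr mulrnAl divff.
rewrite expr1 expn1; move: m_gt0.
move: (odd m) (m./2) (odd_double_half m) => [] t <-; last first.
  rewrite add0n (string_coef_odd a_ij a_ii t).1 => t_gt0 /eqP.
  by rewrite mulrn_eq0 (negbTE aii_neq0) orbF => /eqP t0; rewrite t0 in t_gt0.
rewrite add1n (string_coef_odd a_ij a_ii t).2 => _ /eqP; rewrite addr_eq0 => /eqP ->.
exists t; rewrite mul2n; split=> //.
by rewrite mulrN mulrnAr divfK // -mulr_natl -natrM muln2.
Qed.

(* The combinatorial shadow of integrability: for i <> j the X_i-string
   through X_j has a length m > 0 at which the string coefficient vanishes,
   and a string of length one forces a_ji = 0. *)
Definition sl2_string_condition (R : numClosedFieldType) n (A : 'M[R]_n)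
    (p : 'I_n -> bool) : Prop :=
  forall i j, j != i -> exists m, [/\ (0 < m)%N,
    string_coef ((-1) ^+ p i) (A i j) (A i i) m = 0 & (m = 1%N -> A j i = 0)].

Section ContragredientStrings.
Variables (R : numClosedFieldType) (n : nat) (A : 'M[R]_n) (p : 'I_n -> bool).
Variables (alpha hh : 'M[R]_(n, n + corank A)) (L : lmodType R).
Variables (e : L -> L) (b : L -> L -> L) (iota : 'rV[R]_(n + corank A) -> L).
Variables (X Y : 'I_n -> L).
Hypothesis cartan : hh *m alpha^T = A.
Hypothesis gA : contragredient A p alpha hh e b iota X Y.

Let bracketDl : forall (a : R) u v w, b (a *: u + v) w = a *: b u w + b v w.
Proof. by case: gA => [[_ [_ []]]]. Qed.
Let bracketDr : forall (a : R) u v w, b w (a *: u + v) = a *: b w u + b w v.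
Proof. by case: gA => [[_ [_ [_ []]]]]. Qed.
Let skew : forall q r x y, homog e q x -> homog e r y ->
  b x y = - (((-1) ^+ (q && r)) *: b y x).
Proof. by case: gA => [[_ [_ [_ [_ [_ []]]]]]]. Qed.
Let jacobi : forall q r x y z, homog e q x -> homog e r y ->
  b x (b y z) = b (b x y) z + ((-1) ^+ (q && r)) *: b y (b x z).
Proof. by case: gA => [[_ [_ [_ [_ [_ [_ ]]]]]]]. Qed.
Let parity_X i : homog e (p i) (X i).
Proof. by case: gA => _ [_ [_ [_ [_ [/(_ i) []]]]]]. Qed.
Let parity_Y i : homog e (p i) (Y i).
Proof. by case: gA => _ [_ [_ [_ [_ [/(_ i) []]]]]]. Qed.

Let coroot i := iota (row i hh).

Let coroot_even i : homog e false (coroot i).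
Proof. by case: gA => _ [_ [[even_h _] _]]; apply: even_h. Qed.

Let XY i j : b (X i) (Y j) = if i == j then coroot i else 0.
Proof. by case: gA => _ [_ [_ [_ [XY _]]]]; apply: XY. Qed.

Let root_of_coroot i j : (row i hh *m alpha^T) 0 j = A i j.
Proof. by rewrite -row_mul cartan mxE. Qed.

Lemma coroot_weight i j : b (coroot i) (X j) = A i j *: X j.
Proof. by case: gA => _ [_ [_ [[-> _] _]]]; rewrite root_of_coroot. Qed.

(* Since A has no zero row, no generator X_j vanishes: otherwise
   h_j = [X_j, Y_j] = 0 and iota is injective. *)
Lemma generator_neq0 : elemental A -> forall j, X j != 0.
Proof.
move=> A_elemental j; apply/negP => /eqP Xj0.
case: gA => _ [[iota_lin iota_inj] _].
have iota0 : iota 0 = 0.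
  have := iota_lin 1 0 0; rewrite !scale1r !addr0 => E.
  by apply: (addrI (iota 0)); rewrite addr0 -E.
have := XY j j; rewrite eqxx Xj0 bracket0l // -iota0 => /esym/iota_inj hj0.
case: (A_elemental j) => k.
by rewrite -root_of_coroot hj0 mul0mx mxE eqxx.
Qed.

Lemma lowering_other i j : j != i -> b (Y i) (X j) = 0.
Proof.
by move=> ji; rewrite (skew (parity_Y i) (parity_X j)) XY (negbTE ji) scaler0 oppr0.
Qed.

Lemma lowering_same i : b (Y i) (X i) = - (((-1) ^+ p i) *: coroot i).
Proof. by rewrite (skew (parity_Y i) (parity_X i)) XY eqxx andbb. Qed.

Lemma string_terminates : integrable b X -> elemental A ->
  forall i j, j != i -> exists m, [/\ (0 < m)%N, iter m (b (X i)) (X j) = 0 &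
    string_coef ((-1) ^+ p i) (A i j) (A i i) m = 0].
Proof.
move=> X_integrable A_elemental i j ji.
have jacobi_Y w : b (Y i) (b (X i) w) =
    b (b (Y i) (X i)) w + ((-1) ^+ p i) *: b (X i) (b (Y i) w).
  by rewrite (jacobi _ (parity_Y i) (parity_X i)) andbb.
have jacobi_h w : b (coroot i) (b (X i) w) =
    b (b (coroot i) (X i)) w + b (X i) (b (coroot i) w).
  by rewrite (jacobi _ (coroot_even i) (parity_X i)) /= expr0 scale1r.
apply: (first_vanishing (bracket0r bracketDr (Y i)) (generator_neq0 A_elemental j)
  (X_integrable i (X j))).
exact: (string_lowering bracketDl bracketDr (lowering_same i) jacobi_Y jacobi_h
  (coroot_weight i i) (coroot_weight i j) (lowering_other ji)).
Qed.

(* If [X_i, X_j] = 0 with i <> j, the Jacobi identity with Y_j gives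
   0 = [[Y_j, X_i], X_j] +- [X_i, [Y_j, X_j]] = +- a_ji X_i, so a_ji = 0. *)
Lemma commuting_generators i j : elemental A -> i != j ->
  b (X i) (X j) = 0 -> A j i = 0.
Proof.
move=> A_elemental ij XiXj0.
have := jacobi (X j) (parity_Y j) (parity_X i).
rewrite XiXj0 bracket0r // lowering_other // bracket0l // add0r.
rewrite lowering_same bracketNr // bracketZr // (skew (parity_X i) (coroot_even j)).
rewrite andbF expr0 scale1r coroot_weight !scalerN !opprK !scalerA => /esym/eqP.
rewrite scaler_eq0 (negbTE (generator_neq0 A_elemental i)) orbF !mulf_eq0.
by rewrite !signr_eq0 /= => /eqP.
Qed.

Lemma contragredient_strings : integrable b X -> elemental A ->
  sl2_string_condition A p.
Proof.
move=> X_integrable A_elemental i j ji.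
have [m [m_gt0 vm cm]] := string_terminates X_integrable A_elemental ji.
exists m; split=> // m1; move: vm; rewrite m1 /=.
by apply: commuting_generators; rewrite // eq_sym.
Qed.

End ContragredientStrings.

Definition normalizer (R : numClosedFieldType) n (A : 'M[R]_n) (i : 'I_n) : R :=
  if A i i == 0 then 1 else 2%:R / A i i.

Section Normalization.
Variables (R : numClosedFieldType) (n : nat) (A : 'M[R]_n) (p : 'I_n -> bool).
Hypothesis A_elemental : elemental A.
Hypothesis A_strings : sl2_string_condition A p.

Let A' := rescale_rows (normalizer A) A.

Lemma normalizer_neq0 i : normalizer A i != 0.
Proof.
rewrite /normalizer; case: ifP => [_|Aii]; first exact: oner_neq0.
by rewrite mulf_neq0 ?pnatr_eq0 // invr_eq0 Aii.
Qed.

Lemma normalized_eq0 i j : (A' i j == 0) = (A i j == 0).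
Proof. by rewrite mxE mulf_eq0 (negbTE (normalizer_neq0 i)). Qed.

Lemma normalized_entry i j : A i i != 0 -> A' i j = 2%:R / A i i * A i j.
Proof. by move=> Aii; rewrite mxE /normalizer (negbTE Aii). Qed.

Lemma normalized_C1 : C1 A'.
Proof.
move=> i; have [Aii|Aii] := eqVneq (A i i) 0.
  by left; apply/eqP; rewrite normalized_eq0 Aii.
by right; rewrite normalized_entry // divfK.
Qed.

(* A zero diagonal entry cannot belong to an even root: the strings would
   force the whole row to vanish. *)
Lemma normalized_C2 : C2 A' p.
Proof.
move=> i /eqP; rewrite normalized_eq0 => /eqP Aii.
case p_i : (p i) => //; exfalso.
have [j] := A_elemental i; apply/negP; rewrite negbK.
have [-> | ji] := eqVneq j i; first by rewrite Aii.
have [m [m_gt0 cm _]] := A_strings ji.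
by move: cm; rewrite p_i expr0 Aii => /(string_root_degenerate m_gt0) ->.
Qed.

Lemma normalized_C3 : C3 A' p.
Proof.
move=> i A'ii j ji.
have Aii : A i i != 0.
  apply: contra_eq_neq A'ii => /eqP; rewrite -normalized_eq0 => /eqP ->.
  by rewrite eq_sym pnatr_eq0.
have [m [m_gt0 cm _]] := A_strings ji.
have [k [_ entry]] := string_root Aii m_gt0 cm.
by exists k; rewrite normalized_entry.
Qed.

(* If a_ij = 0 <> a_ji with a_ii <> 0, the string has length one, so
   [X_i, X_j] = 0, which forces a_ji = 0. *)
Lemma normalized_C4 : C4 A'.
Proof.
move=> i j /eqP; rewrite normalized_eq0 => /eqP Aij; rewrite normalized_eq0 => Aji.
apply/eqP; rewrite normalized_eq0; apply/negPn/negP => Aii.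
have ji : j != i by apply: contraNneq Aji => eq_ji; move: Aij; rewrite eq_ji => ->.
have [m [m_gt0 cm m1_Aji]] := A_strings ji.
have [k [mk]] := string_root Aii m_gt0 cm.
rewrite Aij mulr0 => /eqP; rewrite eq_sym oppr_eq0 pnatr_eq0 muln_eq0 expn_eq0 /=.
by move=> /eqP k0; move: Aji; rewrite m1_Aji ?eqxx // mk k0 muln0.
Qed.

End Normalization.

Theorem lemma3p1 (R : numClosedFieldType) (n : nat) (A : 'M[R]_n)
  (p : 'I_n -> bool) (alpha hh : 'M[R]_(n, n + corank A))
  (L : lmodType R) (e : L -> L) (b : L -> L -> L)
  (iota : 'rV[R]_(n + corank A) -> L) (X Y : 'I_n -> L) :
  realization A alpha hh ->
  contragredient A p alpha hh e b iota X Y ->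
  integrable b X -> elemental A -> indecomposable A -> (2 <= n)%N ->
  exists c : 'I_n -> R, (forall i, c i != 0) /\
    let A' := rescale_rows c A in
    [/\ C1 A', C2 A' p, C3 A' p & C4 A'].
Proof.
move=> [_ cartan] gA X_integrable A_elemental _ _.
have A_strings := contragredient_strings cartan gA X_integrable A_elemental.
exists (normalizer A); split=> [|/=]; first exact: normalizer_neq0.
split; first exact: normalized_C1.
- exact: normalized_C2 A_elemental A_strings.
- exact: normalized_C3 A_strings.
- exact: normalized_C4 A_strings.
Qed.
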